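(* Let $G$ be a very well-covered graph with $V(G)=X\cup Y$, $X=\{x_1,\ldots,x_h\}$ a minimal vertex cover, $Y=\{y_1,\ldots,y_h\}$ a maximal independent set, and $\{x_i,y_i\}\in E(G)$ for all $i$. Fix $i\in\{1,\ldots,h\}$ and write $N_G(x_i)\setminus X=\{y_{i_1},\ldots,y_{i_t}\}$. For $j\in\{1,\dots,h\}$ put $x_j'=y_j$ and $y_j'=x_j$ if $j\in\{i_1,\ldots,i_t\}$, and $x_j'=x_j$, $y_j'=y_j$ otherwise; let $X'=\{x_1',\ldots,x_h'\}$ and $Y'=V(G)\setminus X'=\{y_1',\dots,y_h'\}$. Let $G_1$ be $G$ with this relabelling. Then $X'$ is a minimal vertex cover of $G_1$, $Y'$ is a maximal independent set of $G_1$, $\{x_j',y_j'\}\in E(G_1)$ for all $j$, and $G_1$ with respect to the labelling $x_j',y_j'$ satisfies: (1) if $\{z_a,x_b'\},\{y_b',x_c'\}\in E(G_1)$ for distinct $a,b,c$ and $z_a\in\{x_a',y_a'\}$, then $\{z_a,x_c'\}\in E(G_1)$; (2) if $\{x_a',y_b'\}\in E(G_1)$ then $\{x_a',x_b'\}\notin E(G_1)$.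
   Context: $G$ is very well-covered if it has no isolated vertices, all minimal vertex covers have the same size, and this size is $|V(G)|/2$. $N_G(v)$ denotes the set of neighbours of $v$ in $G$. *)

From mathcomp Require Import all_boot.
Set Implicit Arguments. Unset Strict Implicit. Unset Printing Implicit Defensive.

Definition simple_graph (T : finType) (e : rel T) : Prop :=
  symmetric e /\ irreflexive e.

Definition vertex_cover (T : finType) (e : rel T) (C : {set T}) : Prop :=
  forall u v, e u v -> (u \in C) \/ (v \in C).

Definition minimal_vertex_cover (T : finType) (e : rel T) (C : {set T}) : Prop :=
  vertex_cover e C /\ forall D : {set T}, D \proper C -> ~ vertex_cover e D.

Definition independent (T : finType) (e : rel T) (S : {set T}) : Prop :=
  forall u v, u \in S -> v \in S -> ~~ e u v.

Definition maximal_independent (T : finType) (e : rel T) (S : {set T}) : Prop :=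
  independent e S /\ forall S' : {set T}, S \proper S' -> ~ independent e S'.

Definition very_well_covered (T : finType) (e : rel T) : Prop :=
  (forall v : T, exists u : T, e v u) /\
  (forall C : {set T}, minimal_vertex_cover e C -> 2 * #|C| = #|T|).

From mathcomp Require Import all_boot.
From mathcomp Require Import zify.

Set Implicit Arguments.
Unset Strict Implicit.
Unset Printing Implicit Defensive.

(* In a very well-covered graph with a perfect matching {x_j, y_j}, any two
   vertices u, w with u ~ x_j and w ~ y_j are adjacent: otherwise extend
   {u, w} to a maximal independent set M; its complement is a minimal vertex
   cover, hence of size h, so it meets every matching edge exactly once, yet it
   contains both x_j and y_j.  After swapping x_j and y_j for the y_j adjacent
   to x_i, this adjacency rule shows that the new "y" side is still
   independent; since each pair {x'_j, y'_j} is a matching edge, the new "x"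
   side is then a minimal cover and the new "y" side a maximal independent
   set, and conditions (1) and (2) are again instances of the rule. *)

Section IndependentSets.
Variables (T : finType) (e : rel T).
Hypothesis sg : simple_graph e.

Lemma compl_independent_cover (S : {set T}) :
  independent e S -> vertex_cover e (~: S).
Proof.
move=> indS u v uv; rewrite !inE.
case uS: (u \in S); last by left.
case vS: (v \in S); last by right.
by have := indS _ _ uS vS; rewrite uv.
Qed.

Lemma private_neighbours_minimal_cover (C : {set T}) :
  vertex_cover e C -> (forall v, v \in C -> exists2 w, w \notin C & e v w) ->
  minimal_vertex_cover e C.
Proof.
move=> covC priv; split=> // D /properP[DC [v vC vD]] covD.
have [w wC vw] := priv v vC.
case: (covD _ _ vw) => [vD' | wD]; first by rewrite vD' in vD.
by rewrite (subsetP DC _ wD) in wC.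
Qed.

Lemma dominating_maximal_independent (S : {set T}) :
  independent e S -> (forall v, v \notin S -> exists2 w, w \in S & e v w) ->
  maximal_independent e S.
Proof.
move=> indS dom; split=> // S' /properP[SS' [v vS' vS]] indS'.
have [w wS vw] := dom v vS.
by have := indS' _ _ vS' (subsetP SS' _ wS); rewrite vw.
Qed.

Lemma maximal_independent_dominating (S : {set T}) v :
  maximal_independent e S -> v \notin S -> exists2 w, w \in S & e v w.
Proof.
move=> [indS maxS] vS.
have [w /andP[wS vw] | noN] := pickP [pred w | (w \in S) && e v w].
  by exists w.
exfalso; apply: (maxS (v |: S)).
  by apply/properP; split; [exact: subsetUr | exists v; rewrite ?setU11].
move=> a b; rewrite !inE => /predU1P[-> | aS] /predU1P[-> | bS].
- by rewrite sg.2.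
- by have := noN b; rewrite /= bS /= => ->.
- by rewrite sg.1; have := noN a; rewrite /= aS /= => ->.
- exact: indS.
Qed.

Lemma maximal_independent_compl_minimal_cover (M : {set T}) :
  maximal_independent e M -> minimal_vertex_cover e (~: M).
Proof.
move=> maxM; apply: private_neighbours_minimal_cover.
  exact: compl_independent_cover maxM.1.
move=> v; rewrite inE => vM.
have [w wM vw] := maximal_independent_dominating maxM vM.
by exists w; rewrite ?inE ?wM.
Qed.

Definition independentb (S : {set T}) :=
  [forall u in S, forall v in S, ~~ e u v].

Lemma independentP (S : {set T}) : reflect (independent e S) (independentb S).
Proof.
apply: (iffP forall_inP) => indS.
  by move=> u v uS vS; have /forall_inP := indS u uS; apply.
by move=> u uS; apply/forall_inP => v vS; apply: indS.
Qed.

Lemma independent_extends (S : {set T}) :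
  independent e S -> exists2 M : {set T}, S \subset M & maximal_independent e M.
Proof.
move/independentP => indS.
have [M maxM SM] := @maxset_exists _ independentb _ indS.
exists M => //; split; first exact/independentP/(maxsetp maxM).
move=> S' /properP[MS' [v vS' vM]] /independentP indS'.
by move: vM; rewrite -(maxsetsup maxM indS' MS') vS'.
Qed.

Lemma independent_pair u w : ~~ e u w -> independent e [set u; w].
Proof.
move=> uw a b; rewrite !inE => /orP[] /eqP-> /orP[] /eqP->;
  by rewrite ?sg.2 // sg.1.
Qed.

End IndependentSets.

Section Matching.
Variables (T : finType) (e : rel T) (h : nat) (x y : 'I_h -> T).
Hypotheses (x_inj : injective x) (y_inj : injective y).
Hypothesis xy_edge : forall j, e (x j) (y j).

Lemma matching_sides_disjoint :
  #|T| = 2 * h -> [set x j | j : 'I_h] :|: [set y j | j : 'I_h] = [set: T] ->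
  forall j k, x j != y k.
Proof.
move=> cardT XY j k; apply/eqP => xy_jk.
have := cardsUI [set x j | j : 'I_h] [set y j | j : 'I_h].
rewrite XY cardsT cardT !card_imset // card_ord => cardXY.
have /cards0_eq XIY : #|[set x j | j : 'I_h] :&: [set y j | j : 'I_h]| = 0.
  by move: cardXY; lia.
suff : x j \in set0 by rewrite inE.
by rewrite -XIY inE imset_f // xy_jk imset_f.
Qed.

Hypothesis xy_disj : forall j k, x j != y k.

(* A cover of at most [h] vertices contains exactly one endpoint of each
   matching edge: choosing one endpoint per edge already fills it up. *)
Lemma small_cover_splits_matching (C : {set T}) j :
  vertex_cover e C -> #|C| <= h -> x j \in C -> y j \notin C.
Proof.
move=> covC leCh xC; apply/negP => yC.
pose f k := if x k \in C then x k else y k.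
have fC k : f k \in C.
  rewrite /f; case: ifPn => // xkC.
  by case: (covC _ _ (xy_edge k)) => // xkC'; rewrite xkC' in xkC.
have f_inj : injective f.
  move=> k l; rewrite /f; case: ifP; case: ifP => _ _ fkl.
  - exact: x_inj.
  - by have := xy_disj k l; rewrite fkl eqxx.
  - by have := xy_disj l k; rewrite fkl eqxx.
  - exact: y_inj.
have Cf : C = [set f k | k : 'I_h].
  apply/eqP; rewrite eq_sym eqEcard card_imset // card_ord leCh andbT.
  by apply/subsetP => _ /imsetP[k _ ->].
move: yC; rewrite Cf => /imsetP[k _]; rewrite /f; case: ifP => xkC fkj.
  by have := xy_disj k j; rewrite fkj eqxx.
by rewrite -(y_inj fkj) xC in xkC.
Qed.

Hypotheses (sg : simple_graph e) (vwc : very_well_covered e).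
Hypothesis cardT : #|T| = 2 * h.

Lemma very_well_covered_matched_neighbours_adjacent u w j :
  e u (x j) -> e w (y j) -> e u w.
Proof.
move=> ux wy; apply/negPn/negP => uw.
have [M uwM maxM] := independent_extends (independent_pair sg uw).
have minC := maximal_independent_compl_minimal_cover sg maxM.
have cardC : #|~: M| <= h by have := vwc.2 _ minC; lia.
have outside v z : v \in [set u; w] -> e v z -> z \in ~: M.
  move=> /(subsetP uwM) vM vz; rewrite inE; apply/negP => zM.
  by have := maxM.1 _ _ vM zM; rewrite vz.
have xC : x j \in ~: M by apply: (outside u); rewrite ?set21.
have yC : y j \in ~: M by apply: (outside w); rewrite ?set22.
by have := small_cover_splits_matching minC.1 cardC xC; rewrite yC.
Qed.

End Matching.

Lemma matching_partition (T : finType) (e : rel T) (h : nat) (p q : 'I_h -> T) :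
  (forall j, e (p j) (q j)) ->
  [set p j | j : 'I_h] :|: [set q j | j : 'I_h] = [set: T] ->
  independent e [set q j | j : 'I_h] ->
  [/\ [set q j | j : 'I_h] = ~: [set p j | j : 'I_h],
      minimal_vertex_cover e [set p j | j : 'I_h] &
      maximal_independent e [set q j | j : 'I_h]].
Proof.
move=> pq PQ indQ.
have qQ a : q a \in [set q j | j : 'I_h] by exact: imset_f.
have QP : [set q j | j : 'I_h] = ~: [set p j | j : 'I_h].
  apply/setP => v; rewrite inE; case vQ: (v \in _).
    apply/esym/imsetP => -[a _ vpa].
    by have := indQ _ _ vQ (qQ a); rewrite vpa pq.
  by have := in_setT v; rewrite -PQ inE vQ orbF => ->.
split=> //.
  apply: private_neighbours_minimal_cover.
    by rewrite -[[set p j | j : 'I_h]]setCK -QP; exact: compl_independent_cover.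
  by move=> _ /imsetP[j _ ->]; exists (q j); rewrite ?pq // -in_setC -QP qQ.
apply: dominating_maximal_independent => // v.
rewrite {1}QP inE negbK => /imsetP[j _ ->].
by exists (q j); rewrite ?pq ?qQ.
Qed.

Section Swap.
Variables (T : finType) (e : rel T) (h : nat) (x y : 'I_h -> T).
Variable J : {set 'I_h}.

Definition swap_x j := if j \in J then y j else x j.
Definition swap_y j := if j \in J then x j else y j.

Lemma swap_edge : symmetric e -> (forall j, e (x j) (y j)) ->
  forall j, e (swap_x j) (swap_y j).
Proof.
by move=> e_sym xy j; rewrite /swap_x /swap_y; case: ifP; rewrite // e_sym.
Qed.

Lemma swap_union :
  [set swap_x j | j : 'I_h] :|: [set swap_y j | j : 'I_h] =
  [set x j | j : 'I_h] :|: [set y j | j : 'I_h].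
Proof.
have swap_pair k : [set x k; y k] = [set swap_x k; swap_y k].
  by rewrite /swap_x /swap_y; case: (k \in J); rewrite // setUC.
have pairs_sub (p q : 'I_h -> T) k :
    [set p k; q k] \subset [set p j | j : 'I_h] :|: [set q j | j : 'I_h].
  by apply/subsetP => _ /set2P[] ->; rewrite inE imset_f ?orbT.
apply/eqP; rewrite eqEsubset; apply/andP; split; apply/subsetP => _
  /setUP[] /imsetP[k _ ->]; apply: (subsetP (pairs_sub _ _ k));
  by rewrite ?swap_pair ?set21 ?set22 -?swap_pair ?set21 ?set22.
Qed.

Lemma swap_matched_neighbours_adjacent : symmetric e ->
  (forall u w j, e u (x j) -> e w (y j) -> e u w) ->
  forall u w j, e u (swap_x j) -> e w (swap_y j) -> e u w.
Proof.
move=> e_sym adj u w j; rewrite /swap_x /swap_y; case: ifP => _ uq wp.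
  by rewrite e_sym; exact: adj wp uq.
exact: adj uq wp.
Qed.

End Swap.

Section NeighbourhoodSwap.
Variables (T : finType) (e : rel T) (h : nat) (x y : 'I_h -> T).
Variables (i : 'I_h) (J : {set 'I_h}).
Hypotheses (sg : simple_graph e) (y_indep : independent e [set y j | j : 'I_h]).
Hypothesis adj : forall u w j, e u (x j) -> e w (y j) -> e u w.
Hypothesis inJ : forall j, (j \in J) = e (x i) (y j).

Lemma swap_neighbourhood_independent :
  independent e [set swap_y x y J j | j : 'I_h].
Proof.
have no_common v j : e v (x j) -> e v (y j) -> False.
  by move=> vx vy; have := adj vx vy; rewrite sg.2.
have mixed a b : e (x i) (y a) -> ~~ e (x i) (y b) -> ~~ e (x a) (y b).
  move=> ia ib; apply/negP => ab.
  have bi : e (y b) (x i) by apply: (adj _ ia); rewrite sg.1.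
  by rewrite sg.1 bi in ib.
move=> _ _ /imsetP[a _ ->] /imsetP[b _ ->]; rewrite /swap_y.
case: ifP => aJ; case: ifP => bJ; rewrite ?inJ in aJ bJ.
- apply/negP => ab; apply: (no_common (x i) a) aJ.
  by rewrite sg.1; exact: adj ab bJ.
- exact: mixed aJ (negbT bJ).
- by rewrite sg.1; exact: mixed bJ (negbT aJ).
- by apply: y_indep; exact: imset_f.
Qed.

End NeighbourhoodSwap.

Theorem lemma3p4 (T : finType) (e : rel T) (h : nat)
  (x y : 'I_h -> T) (i : 'I_h) :
  simple_graph e ->
  very_well_covered e ->
  injective x -> injective y ->
  [set x j | j : 'I_h] :|: [set y j | j : 'I_h] = [set: T] ->
  minimal_vertex_cover e [set x j | j : 'I_h] ->
  maximal_independent e [set y j | j : 'I_h] ->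
  (forall j : 'I_h, e (x j) (y j)) ->
  let X := [set x j | j : 'I_h] in
  (* indices j with y_j in N_G(x_i) \ X *)
  let J := [set j : 'I_h | (y j \notin X) && e (x i) (y j)] in
  let x' := fun j : 'I_h => if j \in J then y j else x j in
  let y' := fun j : 'I_h => if j \in J then x j else y j in
  let X' := [set x' j | j : 'I_h] in
  let Y' := [set y' j | j : 'I_h] in
  [/\ minimal_vertex_cover e X' /\ Y' = ~: X',
      maximal_independent e Y',
      (forall j : 'I_h, e (x' j) (y' j)),
      (forall (a b c : 'I_h) (z : T), a != b -> b != c -> a != c ->
          (z = x' a \/ z = y' a) ->
          e z (x' b) -> e (y' b) (x' c) -> e z (x' c)) &
      (forall a b : 'I_h, e (x' a) (y' b) -> ~~ e (x' a) (x' b))].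
Proof.
move=> sg vwc x_inj y_inj XY Xmin [y_indep _] xy X J x' y' X' Y'.
have cardT : #|T| = 2 * h.
  by have := vwc.2 _ Xmin; rewrite card_imset // card_ord.
have xy_disj := matching_sides_disjoint x_inj y_inj cardT XY.
have adj := very_well_covered_matched_neighbours_adjacent
              x_inj y_inj xy xy_disj sg vwc cardT.
have inJ j : (j \in J) = e (x i) (y j).
  rewrite inE; case: imsetP => [[k _ yx] | _] //.
  by have := xy_disj k j; rewrite yx eqxx.
have adj' := swap_matched_neighbours_adjacent (J := J) sg.1 adj.
have [Y'X' X'min Y'max] := matching_partition (swap_edge J sg.1 xy)
  (etrans (swap_union x y J) XY)
  (swap_neighbourhood_independent sg y_indep adj inJ).
split=> //.
- exact: swap_edge J sg.1 xy.
- by move=> a b c z _ _ _ _ zb bc; apply: adj' zb _; rewrite sg.1.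
- by move=> a b ab; apply/negP => aab; have := adj' _ _ _ aab ab; rewrite sg.2.
Qed.
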